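(* Let $\mathcal{M}$ be any submonoid of $\mathcal{R}$ that contains $f_p$ for infinitely many primes $p$. Then $\mathcal{M}$ is not finitely generated.
   Context: $\mathcal{R}$ is the group of rational homeomorphisms of $\{0,1\}^\omega$: those $f$ for which there is a finite asynchronous binary transducer $(S,s_0,t,o)$ ($S$ finite, $t\colon S\times\{0,1\}\to S$, $o\colon S\times\{0,1\}\to\{0,1\}^*$) with $f(\psi)=o(s_0,\psi)$, where for $\sigma_1\sigma_2\cdots$ one sets $s_1=s_0$, $s_{n+1}=t(s_n,\sigma_n)$ and $o(s_0,\sigma_1\sigma_2\cdots)=o(s_1,\sigma_1)o(s_2,\sigma_2)\cdots$. For a prime $p$, $f_p\in\mathcal{R}$ is the homeomorphism that switches every $p$-th digit of a binary sequence (the digits in positions $p,2p,3p,\ldots$) and leaves the remaining digits unchanged. *)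

From Stdlib Require Import List.
From mathcomp Require Import all_boot.
Set Implicit Arguments. Unset Strict Implicit. Unset Printing Implicit Defensive.

(* Binary sequences {0,1}^omega, indexed from 0: position k+1 of the paper
   is index k here. *)
Definition cantor_pt := nat -> bool.

Record transducer := Transducer {
  tr_state : finType;
  tr_init : tr_state;
  tr_trans : tr_state -> bool -> tr_state;
  tr_out : tr_state -> bool -> seq bool }.

(* s_{n+1} = t(s_n, sigma_n), with s_1 = s_0 (here index 0). *)
Fixpoint tr_state_at (T : transducer) (psi : cantor_pt) (n : nat) : tr_state T :=
  match n with
  | 0 => tr_init T
  | n'.+1 => tr_trans (tr_state_at T psi n') (psi n')
  end.

Definition tr_prefix (T : transducer) (psi : cantor_pt) (n : nat) : seq bool :=
  flatten [seq tr_out (tr_state_at T psi k) (psi k) | k <- iota 0 n].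

(* f(psi) = o(s0, psi): the infinite concatenation of outputs is an infinite
   sequence and equals f psi. *)
Definition computes (T : transducer) (f : cantor_pt -> cantor_pt) : Prop :=
  forall psi : cantor_pt,
    (forall i, exists n, i < size (tr_prefix T psi n)) /\
    (forall n i, i < size (tr_prefix T psi n) ->
                 f psi i = nth false (tr_prefix T psi n) i).

Definition cantor_continuous (f : cantor_pt -> cantor_pt) : Prop :=
  forall (psi : cantor_pt) (n : nat), exists m : nat, forall phi : cantor_pt,
    (forall i, i < m -> phi i = psi i) -> forall i, i < n -> f phi i = f psi i.

Definition cantor_homeo (f : cantor_pt -> cantor_pt) : Prop :=
  exists g : cantor_pt -> cantor_pt,
    [/\ cancel f g, cancel g f, cantor_continuous f & cantor_continuous g].

Definition rational_homeo (f : cantor_pt -> cantor_pt) : Prop :=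
  cantor_homeo f /\ exists T : transducer, computes T f.

(* f_p: switch the digits in positions p, 2p, 3p, ... (1-indexed). *)
Definition f_switch (p : nat) (psi : cantor_pt) : cantor_pt :=
  fun k => if p %| k.+1 then ~~ psi k else psi k.

Definition submonoid_R (M : (cantor_pt -> cantor_pt) -> Prop) : Prop :=
  [/\ forall f, M f -> rational_homeo f,
      M id &
      forall f g, M f -> M g -> M (f \o g)].

Definition word_prod (w : seq (cantor_pt -> cantor_pt)) : cantor_pt -> cantor_pt :=
  foldr (fun f g => f \o g) id w.

Definition fin_gen_monoid (M : (cantor_pt -> cantor_pt) -> Prop) : Prop :=
  exists gens : seq (cantor_pt -> cantor_pt),
    (forall g, List.In g gens -> M g) /\
    (forall f, M f -> exists w : seq (cantor_pt -> cantor_pt),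
        (forall g, List.In g w -> List.In g gens) /\ f = word_prod w).

From mathcomp Require Import all_boot.
From mathcomp Require Import zify.
From Stdlib Require Import FunctionalExtensionality.

Set Implicit Arguments. Unset Strict Implicit. Unset Printing Implicit Defensive.

(* Call h n-pumpable if for all finite words u, w there are t0 and
   a number Q > 0 whose prime factors are all at most n such that
   h(u w^(t0 + Q j) z) = A V^j R(z) for fixed words A, V and a fixed map R.
   A transducer with n states is n-pumpable: the states reached after reading
   u w^t are eventually periodic in t with period c <= n, and once the state
   repeats, so does the output.  Pumpability is preserved by composition, so
   every element of a monoid generated by finitely many rational maps is
   n-pumpable for one n.  But if f_p is n-pumpable, then pumping the word 0
   forces p to divide Q, since f_p flips exactly the digits at positions
   divisible by p; hence p <= n. *)

Definition cat_pt (x : seq bool) (z : cantor_pt) : cantor_pt :=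
  fun i => if i < size x then nth false x i else z (i - size x).

Definition shift (psi : cantor_pt) : cantor_pt := fun i => psi i.+1.

Definition wpow (T : Type) (w : seq T) (k : nat) : seq T := flatten (nseq k w).

Lemma wpowD (T : Type) (w : seq T) a b : wpow w (a + b) = wpow w a ++ wpow w b.
Proof. by elim: a => //= a IH; rewrite /wpow /= -catA -IH. Qed.

Lemma wpowM (T : Type) (w : seq T) a b : wpow w (a * b) = wpow (wpow w a) b.
Proof. by elim: b => [|b IH]; rewrite ?muln0 // mulnS wpowD IH. Qed.

Lemma wpow_seq1 (T : Type) (b : T) m : wpow [:: b] m = nseq m b.
Proof. by elim: m => //= m <-. Qed.

Lemma cat_pt0 z : cat_pt [::] z = z.
Proof. by apply: functional_extensionality => i; rewrite /cat_pt subn0. Qed.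

Lemma shift_cat_pt b x z : shift (cat_pt (b :: x) z) = cat_pt x z.
Proof. by apply: functional_extensionality => i; rewrite /shift /cat_pt /= ltnS subSS. Qed.

Lemma cat_pt_addl x z i : cat_pt x z (size x + i) = z i.
Proof. by rewrite /cat_pt ltnNge leq_addr /= addKn. Qed.

Lemma cat_pt_drop x psi : (forall i, i < size x -> psi i = nth false x i) ->
  cat_pt x (fun i => psi (size x + i)) = psi.
Proof.
move=> psi_x; apply: functional_extensionality => i; rewrite /cat_pt.
by case: ltnP => [/psi_x -> | /subnKC ->].
Qed.

Lemma iter_eventually_periodic (S : finType) (F : S -> S) s :
  exists t0 c, 0 < c <= #|S| /\ iter (t0 + c) F s = iter t0 F s.
Proof.
have /trajectP [t0 lt_t0 e] := looping_order F s.
exists t0, (order F s - t0); rewrite subnKC ?(ltnW lt_t0) // subn_gt0 lt_t0.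
by split=> //; apply: leq_trans (leq_subr _ _) (max_card _).
Qed.

(* Restarting at s lets [tr_prefix] describe runs from an arbitrary state. *)
Definition restart (T : transducer) (s : tr_state T) : transducer :=
  Transducer s (@tr_trans T) (@tr_out T).

Lemma restart_init (T : transducer) : restart (tr_init T) = T.
Proof. by case: T. Qed.

Lemma size_tr_prefix_mono (T : transducer) psi m n : m <= n ->
  size (tr_prefix T psi m) <= size (tr_prefix T psi n).
Proof.
move/subnKC <-.
by rewrite /tr_prefix iotaD map_cat flatten_cat size_cat leq_addr.
Qed.

Lemma computes_unique (T : transducer) g1 g2 :
  computes T g1 -> computes T g2 -> g1 = g2.
Proof.
move=> h1 h2; apply: functional_extensionality => psi.
apply: functional_extensionality => i.
have [[ex_n nth1] [_ nth2]] := (h1 psi, h2 psi).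
by have [n lt_i] := ex_n i; rewrite (nth1 n i lt_i) (nth2 n i lt_i).
Qed.

Section Runs.

Variable T : transducer.
Implicit Types (s : tr_state T) (x y : seq bool).

Definition run s x : tr_state T := foldl (@tr_trans T) s x.

Fixpoint out s x : seq bool :=
  if x is b :: x' then tr_out s b ++ out (tr_trans s b) x' else [::].

Lemma run_cat s x y : run s (x ++ y) = run (run s x) y.
Proof. exact: foldl_cat. Qed.

Lemma out_cat s x y : out s (x ++ y) = out s x ++ out (run s x) y.
Proof. by elim: x s => [|b x IH] s //=; rewrite IH catA. Qed.

Lemma run_wpow s w k : run s (wpow w k) = iter k (run^~ w) s.
Proof. by elim: k s => // k IH s; rewrite iterSr -IH /wpow /= run_cat. Qed.

Lemma run_wpow_fixed s y j : run s y = s -> run s (wpow y j) = s.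
Proof. by move=> fix_s; elim: j => //= j IH; rewrite run_cat fix_s. Qed.

Lemma out_wpow_fixed s y j : run s y = s -> out s (wpow y j) = wpow (out s y) j.
Proof. by move=> fix_s; elim: j => //= j IH; rewrite out_cat fix_s IH. Qed.

Lemma tr_state_at_restartS s psi n :
  tr_state_at (restart s) psi n.+1 =
  tr_state_at (restart (tr_trans s (psi 0))) (shift psi) n.
Proof. by elim: n => //= n ->. Qed.

Lemma tr_prefix_restartS s psi n :
  tr_prefix (restart s) psi n.+1 =
  tr_out s (psi 0) ++ tr_prefix (restart (tr_trans s (psi 0))) (shift psi) n.
Proof.
rewrite /tr_prefix /= -[1]/(1 + 0) iotaDl -map_comp; congr (_ ++ flatten _).
by apply: eq_map => k; rewrite [in LHS]/= -tr_state_at_restartS.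
Qed.

Lemma tr_prefix_cat s x z k :
  tr_prefix (restart s) (cat_pt x z) (size x + k) =
  out s x ++ tr_prefix (restart (run s x)) z k.
Proof.
elim: x s => [|b x IH] s; first by rewrite cat_pt0.
by rewrite /= addSn tr_prefix_restartS shift_cat_pt IH catA.
Qed.

Lemma computes_cat s g x : computes (restart s) g ->
  exists2 r, computes (restart (run s x)) r &
             forall z, g (cat_pt x z) = cat_pt (out s x) (r z).
Proof.
move=> hg; pose o := out s x.
exists (fun z i => g (cat_pt x z) (size o + i)) => [z | z].
  have [ex_n nth_g] := hg (cat_pt x z); split=> [i | n i lt_i].
    have [n lt_n] := ex_n (size o + i); exists n.
    have := leq_trans lt_n (size_tr_prefix_mono _ _ (leq_addl (size x) n)).
    by rewrite tr_prefix_cat size_cat ltn_add2l.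
  rewrite (nth_g (size x + n)) tr_prefix_cat ?size_cat ?ltn_add2l //.
  by rewrite nth_cat ltnNge leq_addr /= addKn.
apply/esym/cat_pt_drop => i lt_i; have [_ nth_g] := hg (cat_pt x z).
by rewrite (nth_g (size x + 0)) tr_prefix_cat /= cats0.
Qed.

End Runs.

Definition pumpable (n : nat) (h : cantor_pt -> cantor_pt) : Prop :=
  forall u w : seq bool, exists t0 Q (A V : seq bool) (R : cantor_pt -> cantor_pt),
    [pred q | q <= n].-nat Q /\
    forall j z, h (cat_pt (u ++ wpow w (t0 + Q * j)) z) = cat_pt (A ++ wpow V j) (R z).

Lemma pnat_leq n c : 0 < c <= n -> [pred q | q <= n].-nat c.
Proof.
case/andP=> c_gt0 le_cn; apply/pnatP => // q _ dvd_qc.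
exact: leq_trans (dvdn_leq c_gt0 dvd_qc) le_cn.
Qed.

Lemma computes_pumpable (T : transducer) g : computes T g -> pumpable #|tr_state T| g.
Proof.
move=> hg u w; pose s0 := run (tr_init T) u.
have [t0 [c [c_bounds periodic]]] := iter_eventually_periodic (@run T ^~ w) s0.
pose ss := iter t0 (@run T ^~ w) s0.
have ss_fixed : run ss (wpow w c) = ss by rewrite run_wpow -iterD addnC.
have run_t0 : run (tr_init T) (u ++ wpow w t0) = ss by rewrite run_cat run_wpow.
have run_pump j : run (tr_init T) (u ++ wpow w (t0 + c * j)) = ss.
  by rewrite wpowD wpowM catA run_cat run_t0 run_wpow_fixed.
have hg0 : computes (restart (tr_init T)) g by rewrite restart_init.
have [R hR _] := computes_cat (u ++ wpow w t0) hg0.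
exists t0, c, (out (tr_init T) (u ++ wpow w t0)), (out ss (wpow w c)), R.
split=> [|j z]; first exact: pnat_leq.
have [R' hR' ->] := computes_cat (u ++ wpow w (t0 + c * j)) hg0.
rewrite run_t0 in hR; rewrite run_pump in hR'; rewrite (computes_unique hR' hR).
by rewrite wpowD wpowM catA out_cat run_t0 out_wpow_fixed.
Qed.

Lemma pumpable_id n : pumpable n id.
Proof. by move=> u w; exists 0, 1, u, w, id; split=> // j z; rewrite mul1n. Qed.

Lemma pumpable_comp n h1 h2 : pumpable n h1 -> pumpable n h2 -> pumpable n (h1 \o h2).
Proof.
move=> pump1 pump2 u w.
have [t0 [Q [A [V [R [nQ eq2]]]]]] := pump2 u w.
have [t0' [Q' [A' [V' [R' [nQ' eq1]]]]]] := pump1 A V.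
exists (t0 + Q * t0'), (Q * Q'), A', V', (R' \o R).
split=> [|j z /=]; first by rewrite pnatM nQ nQ'.
by rewrite -addnA -mulnA -mulnDr eq2 eq1.
Qed.

Lemma pumpable_mono n m h : n <= m -> pumpable n h -> pumpable m h.
Proof.
move=> le_nm pump u w; have [t0 [Q [A [V [R [nQ eq_h]]]]]] := pump u w.
exists t0, Q, A, V, R; split=> //; apply: sub_in_pnat nQ => q _.
by rewrite !inE => /leq_trans; apply.
Qed.

Lemma pumpable_word_prod n ws :
  (forall g, List.In g ws -> pumpable n g) -> pumpable n (word_prod ws).
Proof.
elim: ws => [|g ws IH] pump_ws /=; first exact: pumpable_id.
by apply: pumpable_comp; [apply: pump_ws; left | apply: IH => g' ?; apply: pump_ws; right].
Qed.

Lemma pumpable_uniform (gs : seq (cantor_pt -> cantor_pt)) :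
  (forall g, List.In g gs -> exists n, pumpable n g) ->
  exists n, forall g, List.In g gs -> pumpable n g.
Proof.
elim: gs => [|g gs IH] pump_gs; first by exists 0.
have [n pump_n] := IH (fun g' in_gs => pump_gs g' (or_intror in_gs)).
have [m pump_m] := pump_gs g (or_introl erefl).
exists (maxn n m) => g' [<- | /pump_n].
- exact: pumpable_mono (leq_maxr n m) pump_m.
- exact: pumpable_mono (leq_maxl n m).
Qed.

Lemma rational_homeo_pumpable f : rational_homeo f -> exists n, pumpable n f.
Proof. by case=> _ [T /computes_pumpable]; exists #|tr_state T|. Qed.

Lemma f_switch_cat_zeros p m z k : m <= k ->
  f_switch p (cat_pt (nseq m false) z) k = (p %| k.+1) (+) z (k - m).
Proof.
by move=> le_mk; rewrite /f_switch /cat_pt size_nseq ltnNge le_mk /=; case: (p %| _).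
Qed.

Lemma f_switch_pumpable p n : prime p -> pumpable n (f_switch p) -> p <= n.
Proof.
move=> p_pr /(_ [::] [:: false]) [t0 [Q [A [V [R [nQ eq_f]]]]]].
pose a := size A; pose v := size V.
have f_shift z k : t0 + Q <= k ->
    (p %| (a + k).+1) (+) z (a + k - t0) =
    (p %| (a + v + k).+1) (+) z (a + v + k - (t0 + Q)).
  move=> le_k; rewrite -!f_switch_cat_zeros; try lia.
  have := eq_f 0 z; have := eq_f 1 z; rewrite muln0 addn0 muln1 !wpow_seq1 /wpow /= !cats0.
  by move=> -> ->; rewrite /a /v -size_cat !cat_pt_addl.
have dvd_shift k : t0 + Q <= k -> (p %| (a + k).+1) = (p %| (a + v + k).+1).
  by move=> /(f_shift (fun _ => false)); rewrite !addbF.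
have p_v : p %| v.
  pose K := (a + t0 + Q).+1; have le_K : K <= p * K by rewrite leq_pmull ?prime_gt0.
  have := dvd_shift (p * K - a.+1).
  have -> : (a + (p * K - a.+1)).+1 = p * K by lia.
  have -> : (a + v + (p * K - a.+1)).+1 = v + p * K by lia.
  rewrite dvdn_mulr // dvdn_addl ?dvdn_mulr // => dvd_v; rewrite -dvd_v //; lia.
(* Once the divisibility bits cancel, f_shift says z (a + Q) = z (a + v) for all z. *)
have v_Q : v = Q.
  have := f_shift (pred1 (a + Q)) (t0 + Q) (leqnn _).
  rewrite -dvd_shift // => /addbI.
  have -> : a + (t0 + Q) - t0 = a + Q by lia.
  have -> : a + v + (t0 + Q) - (t0 + Q) = a + v by lia.
  by rewrite /= eqxx => /esym/eqP; lia.
by have := pnat_dvd p_v; rewrite v_Q => /(_ _ nQ); rewrite pnatE.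
Qed.

Theorem theorem3p1 (M : (cantor_pt -> cantor_pt) -> Prop) :
  submonoid_R M ->
  (forall N : nat, exists p : nat, [/\ N <= p, prime p & M (f_switch p)]) ->
  ~ fin_gen_monoid M.
Proof.
move=> [M_rational _ _] inf_primes [gens [M_gens gen_M]].
have [n pump_gens] : exists n, forall g, List.In g gens -> pumpable n g.
  by apply: pumpable_uniform => g /M_gens/M_rational/rational_homeo_pumpable.
have [p [lt_np p_pr M_fp]] := inf_primes n.+1.
have [ws [ws_gens fp_ws]] := gen_M _ M_fp.
have : p <= n.
  apply: (f_switch_pumpable p_pr); rewrite fp_ws.
  by apply: pumpable_word_prod => g /ws_gens/pump_gens.
by rewrite leqNgt lt_np.
Qed.
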